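(* Let $p$ be a prime, let $k\geq1$ and $s\geq 1$ be integers, and let $n=p^s+1$. Let $H$ be a pro-$p$ group satisfying one of the following conditions, where $I$ is an arbitrary index set and products carry the product topology: (1) $H\simeq\prod_I\mathbb{Z}/p^{s+1}\mathbb{Z}$; (2) $H\simeq U\rtimes V$ with $U=\prod_I\mathbb{Z}/p^{s+1}\mathbb{Z}$ and $V=\mathbb{Z}/p^{s+1}\mathbb{Z}$, and there is a generator $\sigma$ of $V$ such that $\sigma\tau\sigma^{-1}=\tau^{p^k+1}$ for all $\tau\in U$; (3) $p=2$, $H\simeq U\rtimes V$ with $U=\prod_I\mathbb{Z}/2^{s+1}\mathbb{Z}$, $V=\mathbb{Z}/2^{s+1}\mathbb{Z}$, and there is a generator $\sigma$ of $V$ with $\sigma\tau\sigma^{-1}=\tau^{-(2^k+1)}$ for all $\tau\in U$; (4) $p=2$, $H\simeq U\rtimes V$ with $U=\prod_I\mathbb{Z}/2^{s+1}\mathbb{Z}$, $V=\mathbb{Z}/2^{s+1}\mathbb{Z}$, and there is a generator $\sigma$ of $V$ with $\sigma\tau\sigma^{-1}=\tau^{-1}$ for all $\tau\in U$. Then for every $u\in H$ with $u\neq1$ there exists a continuous homomorphism $\rho\colon H\to\mathrm{U}_n(\mathbb{F}_p)$ with $\rho(u)\neq1$.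
   Context: $\mathrm{U}_n(\mathbb{F}_p)$ denotes the group of upper-triangular unipotent $n\times n$ matrices over $\mathbb{F}_p$. *)

From mathcomp Require Import all_boot all_order all_algebra.
From Stdlib Require List.
Set Implicit Arguments. Unset Strict Implicit. Unset Printing Implicit Defensive.
Import GRing.Theory.
Local Open Scope ring_scope.

(* The group H = U x| V with U = prod_I Z/qZ (written additively as
   functions I -> 'Z_q), V = Z/qZ = <sigma>, and sigma acting on U by
   tau |-> tau^e, i.e. multiplication by e in additive notation.
   An element (tau, a) stands for tau * sigma^a.  Product:
   (t1, a)(t2, b) = (t1 + e^a t2, a + b).
   (Well defined as a group law when e^q = 1 mod q, which holds in all four
   cases of the proposition; case (1) is e = 1, the direct product.) *)
Definition semidir_mul (I : Type) (q : nat) (e : int)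
  (x y : (I -> 'Z_q) * 'Z_q) : (I -> 'Z_q) * 'Z_q :=
  (fun i => x.1 i + ((e%:~R : 'Z_q) ^+ (nat_of_ord x.2)) * y.1 i, x.2 + y.2).

Definition semidir_one (I : Type) (q : nat) : (I -> 'Z_q) * 'Z_q :=
  (fun _ => 0, 0).

(* Continuity of a map from prod_I (Z/qZ) x Z/qZ (product topology of the
   discrete finite factors) into a discrete space, unfolded: every point has
   a basic open (cylinder) neighbourhood, fixing finitely many coordinates
   J of U and the V-coordinate, on which the map is constant. *)
Definition prod_locally_constant (I : Type) (q : nat) (T : Type)
  (f : (I -> 'Z_q) * 'Z_q -> T) : Prop :=
  forall x, exists J : seq I,
    forall y, (forall i, List.In i J -> y.1 i = x.1 i) -> y.2 = x.2 ->
      f y = f x.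

Definition upper_unitriangular (p n : nat) (A : 'M['F_p]_n) : Prop :=
  forall i j : 'I_n,
    ((j < i)%N -> A i j = 0) /\ (i = j -> A i j = 1).

Definition fun_locally_constant (I : Type) (q : nat) (T : Type)
  (f : (I -> 'Z_q) -> T) : Prop :=
  forall x, exists J : seq I,
    forall y, (forall i, List.In i J -> y i = x i) -> f y = f x.

From mathcomp Require Import all_boot all_order all_algebra.
From mathcomp Require Import zify ring.
From Stdlib Require Import Classical FunctionalExtensionality.
Set Implicit Arguments. Unset Strict Implicit. Unset Printing Implicit Defensive.
Import GRing.Theory.
Local Open Scope ring_scope.

(* Let J = 1 + N be the unipotent Jordan block of size p^s + 1 over F_p.  In
   characteristic p, J^(p^v) = 1 + N^(p^v), which is 1 exactly when v > s, so
   J has order p^(s+1) and t |-> J^t is faithful on Z/p^(s+1).  In each case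
   e = 1 + p w, hence d = e^-1 mod p^(s+1) is 1 mod p too, and
   J^d - 1 = N (1 + J + ... + J^(d-1)) is N times a unit: the substitution
   N |-> J^d - 1 is an automorphism of F_p[N] = F_p[J] sending J to J^d.  Its
   matrix S is unitriangular, has order dividing p^(s+1) and satisfies
   S J S^-1 = J^e, so (t, a) |-> J^t S^a is a representation of U x| V; it
   detects every element with a nonzero U-coordinate, and (t, a) |-> J^a
   detects the others. *)

Section UpperTriangular.
Variables (R : nzRingType) (n : nat).

Definition upper_trig_diag (c : R) (A : 'M[R]_n.+1) :=
  forall i j : 'I_n.+1, ((j < i)%N -> A i j = 0) /\ (i = j -> A i j = c).

Lemma upper_trig_diag0 : upper_trig_diag 0 0.
Proof. by move=> i j; rewrite mxE. Qed.

Lemma upper_trig_diag1 : upper_trig_diag 1 1.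
Proof.
move=> i j; rewrite -idmxE mxE; split => [lt_ji | ->]; last by rewrite eqxx.
by case: eqP lt_ji => // ->; rewrite ltnn.
Qed.

Lemma upper_trig_diagD c1 c2 A B :
  upper_trig_diag c1 A -> upper_trig_diag c2 B -> upper_trig_diag (c1 + c2) (A + B).
Proof.
move=> tA tB i j; rewrite mxE; split=> [lt_ji | eq_ij].
  by rewrite (proj1 (tA i j)) // (proj1 (tB i j)) // addr0.
by rewrite (proj2 (tA i j)) // (proj2 (tB i j)).
Qed.

Lemma upper_trig_diagM c1 c2 A B :
  upper_trig_diag c1 A -> upper_trig_diag c2 B -> upper_trig_diag (c1 * c2) (A * B).
Proof.
move=> tA tB i j; rewrite -mulmxE mxE; split=> [lt_ji | <-].
  rewrite big1 // => k _; case: (ltnP k i) => [lt_ki | le_ik].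
    by rewrite (proj1 (tA i k)) ?mul0r.
  by rewrite (proj1 (tB k j)) ?mulr0 // (leq_trans lt_ji le_ik).
rewrite (bigD1 i) //= (proj2 (tA i i)) // (proj2 (tB i i)) // big1 ?addr0 // => k ne_ki.
case: (ltnP k i) => [lt_ki | le_ik]; first by rewrite (proj1 (tA i k)) ?mul0r.
rewrite (proj1 (tB k i)) ?mulr0 // ltn_neqAle le_ik andbT.
by apply: contra ne_ki => /eqP/val_inj ->.
Qed.

Lemma upper_trig_diagX c A k : upper_trig_diag c A -> upper_trig_diag (c ^+ k) (A ^+ k).
Proof.
move=> tA; elim: k => [|k IHk]; first by rewrite !expr0; apply: upper_trig_diag1.
by rewrite !exprSr; apply: upper_trig_diagM.
Qed.

Lemma upper_trig_diag1M A B :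
  upper_trig_diag 1 A -> upper_trig_diag 1 B -> upper_trig_diag 1 (A * B).
Proof.
by move=> tA tB; rewrite -[X in upper_trig_diag X](mulr1 1); apply: upper_trig_diagM.
Qed.

Lemma upper_trig_diag1X A k : upper_trig_diag 1 A -> upper_trig_diag 1 (A ^+ k).
Proof. by move=> tA; rewrite -(expr1n R k); apply: upper_trig_diagX. Qed.

End UpperTriangular.

Section JordanBlock.
Variables (R : nzRingType) (n : nat).

Definition shift_mx : 'M[R]_n.+1 := \matrix_(i, j) (i.+1 == j :> nat)%:R.

Definition jordan_mx : 'M[R]_n.+1 := 1 + shift_mx.

Lemma sum_ord_delta (c : nat) (F : 'I_n.+1 -> R) :
  \sum_(k < n.+1) (k == c :> nat)%:R * F k = if (c < n.+1)%N then F (inord c) else 0.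
Proof.
case: ifP => [lt_cn | ge_cn].
  rewrite (bigD1 (inord c)) //= inordK // eqxx mul1r big1 ?addr0 // => k ne_kc.
  case: eqP => [eq_kc | _]; last by rewrite mul0r.
  by case/eqP: ne_kc; apply: val_inj; rewrite /= inordK.
rewrite big1 // => k _; case: eqP => [eq_kc | _]; last by rewrite mul0r.
by move: (ltn_ord k); rewrite eq_kc ge_cn.
Qed.

Lemma shift_mxX_entry a (i j : 'I_n.+1) : (shift_mx ^+ a) i j = (i + a == j)%N%:R.
Proof.
elim: a i j => [|a IHa] i j; first by rewrite expr0 addn0 -idmxE mxE.
rewrite exprSr -mulmxE mxE.
under eq_bigr => k _ do rewrite IHa mxE eq_sym.
rewrite sum_ord_delta; case: ifP => [lt_in | ge_in]; first by rewrite inordK // addnS.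
by case: eqP => // eq_j; move: (ltn_ord j) ge_in; rewrite -eq_j; lia.
Qed.

Lemma shift_mxX_eq0 a : (n < a)%N -> shift_mx ^+ a = 0.
Proof.
move=> lt_na; apply/matrixP => i j; rewrite shift_mxX_entry mxE.
by case: eqP => // eq_j; move: (ltn_ord j); rewrite -eq_j; lia.
Qed.

Lemma shift_mxX_eq0E a : (shift_mx ^+ a == 0) = (n < a)%N.
Proof.
apply/eqP/idP => [Na0 | ]; last exact: shift_mxX_eq0.
rewrite ltnNge; apply/negP => le_an.
have /eqP := congr1 (fun A : 'M_n.+1 => A 0 (inord a)) Na0.
by rewrite shift_mxX_entry mxE inordK // add0n eqxx oner_eq0.
Qed.

Lemma shift_mxXM_entry a (B : 'M[R]_n.+1) (i j : 'I_n.+1) :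
  (shift_mx ^+ a *m B) i j = if (i + a < n.+1)%N then B (inord (i + a)%N) j else 0.
Proof.
rewrite mxE -(sum_ord_delta _ (fun k => B k j)).
by apply: eq_bigr => k _; rewrite shift_mxX_entry eq_sym.
Qed.

Lemma upper_trig_diag_shift : upper_trig_diag 0 shift_mx.
Proof.
move=> i j; rewrite mxE; split=> [lt_ji | ->]; last by rewrite eqn_leq ltnn.
by case: eqP lt_ji => // <-; rewrite ltnNge leqnSn.
Qed.

Lemma upper_trig_diag_jordan : upper_trig_diag 1 jordan_mx.
Proof.
by rewrite -[1 : R]addr0; apply: upper_trig_diagD;
  [apply: upper_trig_diag1 | apply: upper_trig_diag_shift].
Qed.

Lemma jordan_mxXB1 d : jordan_mx ^+ d - 1 = shift_mx * \sum_(k < d) jordan_mx ^+ k.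
Proof. by rewrite subrX1 /jordan_mx addrAC subrr add0r. Qed.

Lemma commr_shift_jordan_sum d : GRing.comm shift_mx (\sum_(k < d) jordan_mx ^+ k).
Proof.
by apply: commr_sum => k _; apply/commrX; rewrite /GRing.comm mulrDl mulrDr mul1r mulr1.
Qed.

Lemma jordan_mxXB1_nilpotent d : (jordan_mx ^+ d - 1) ^+ n.+1 = 0.
Proof.
by rewrite jordan_mxXB1 exprMn_comm ?shift_mxX_eq0 ?mul0r //; apply: commr_shift_jordan_sum.
Qed.

Lemma upper_trig_diag_jordanXB1 d k :
  exists2 C, (jordan_mx ^+ d - 1) ^+ k = shift_mx ^+ k * C & upper_trig_diag (d%:R ^+ k) C.
Proof.
exists ((\sum_(l < d) jordan_mx ^+ l) ^+ k).
  by rewrite jordan_mxXB1 exprMn_comm //; apply: commr_shift_jordan_sum.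
apply: upper_trig_diagX; elim: d => [|d IHd]; first by rewrite big_ord0; apply: upper_trig_diag0.
rewrite big_ord_recr /= -addn1 natrD; apply: upper_trig_diagD => //.
exact/upper_trig_diag1X/upper_trig_diag_jordan.
Qed.

End JordanBlock.

Lemma intertwineX (R : pzSemiRingType) (X A B : R) k :
  X * A = B * X -> X * A ^+ k = B ^+ k * X.
Proof.
move=> XA; elim: k => [|k IHk]; first by rewrite !expr0 mul1r mulr1.
by rewrite exprSr mulrA IHk -mulrA XA mulrA -exprSr.
Qed.

Section JordanSubstitution.
Variables (R : nzRingType) (n : nat).
Local Notation J := (jordan_mx R n).
Local Notation N := (shift_mx R n).

(* A polynomial in N is determined by its first row, which lists its
   coefficients; row i of [jordan_subst_mx d] is thus the image of N^i under the
   substitution N |-> J^d - 1, in the basis 1, N, ..., N^n. *)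
Definition jordan_subst_mx d : 'M[R]_n.+1 := \matrix_(i, j) ((J ^+ d - 1) ^+ i) 0 j.

Lemma jordan_subst_mxM_entry d (X : 'M[R]_n.+1) i j :
  (jordan_subst_mx d *m X) i j = ((J ^+ d - 1) ^+ i *m X) 0 j.
Proof. by rewrite !mxE; apply: eq_bigr => k _; rewrite mxE. Qed.

Lemma jordan_subst_mx_conj d : jordan_subst_mx d * J ^+ d = J * jordan_subst_mx d.
Proof.
apply/matrixP => i j; symmetry.
rewrite {1}/jordan_mx mulrDl mul1r -(subrK 1 (J ^+ d)) mulrDr mulr1.
rewrite mxE [in RHS]mxE addrC; congr (_ + _).
rewrite -!mulmxE -[N]expr1 shift_mxXM_entry jordan_subst_mxM_entry mulmxE -exprSr addn1.
case: ifP => [lt_in | ge_in]; first by rewrite mxE inordK.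
have -> : i.+1 = n.+1 by move: (ltn_ord i) ge_in; lia.
by rewrite jordan_mxXB1_nilpotent mxE.
Qed.

Lemma jordan_subst_mxM d1 d2 :
  jordan_subst_mx d1 * jordan_subst_mx d2 = jordan_subst_mx (d2 * d1).
Proof.
apply/matrixP => i j.
rewrite -mulmxE jordan_subst_mxM_entry mulmxE.
rewrite -(intertwineX i (A := (J ^+ d2) ^+ d1 - 1)); last first.
  by rewrite mulrBl mulrBr mul1r mulr1 (intertwineX d1 (jordan_subst_mx_conj d2)).
by rewrite -mulmxE jordan_subst_mxM_entry expr0 mul1mx mxE -exprM.
Qed.

Lemma jordan_subst_mx1 : jordan_subst_mx 1 = 1.
Proof.
apply/matrixP => i j; rewrite mxE expr1 /jordan_mx addrAC subrr add0r.
by rewrite shift_mxX_entry -idmxE mxE.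
Qed.

Lemma jordan_subst_mxX d k : jordan_subst_mx d ^+ k = jordan_subst_mx (d ^ k).
Proof.
elim: k => [|k IHk]; first by rewrite expr0 expn0 jordan_subst_mx1.
by rewrite exprSr IHk jordan_subst_mxM expnS.
Qed.

Lemma jordan_subst_mx_mod q d : J ^+ q = 1 -> jordan_subst_mx (d %% q) = jordan_subst_mx d.
Proof. by move=> Jq; rewrite /jordan_subst_mx expr_mod. Qed.

Lemma upper_trig_diag_jordan_subst d :
  d%:R = 1 :> R -> upper_trig_diag 1 (jordan_subst_mx d).
Proof.
move=> d1 i j; have [C eqC tC] := upper_trig_diag_jordanXB1 R n d i.
rewrite mxE eqC -mulmxE shift_mxXM_entry add0n ltn_ord inord_val.
by rewrite d1 expr1n in tC; apply: tC.
Qed.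

End JordanSubstitution.

Lemma expr1Dp_pchar (R : nzRingType) p (x : R) v :
  p \in [pchar R] -> (1 + x) ^+ (p ^ v) = 1 + x ^+ (p ^ v).
Proof.
move=> pcharRp; elim: v => [|v IHv]; first by rewrite !expn0 !expr1.
rewrite expnSr !exprM IHv -!(pFrobenius_autE pcharRp) pFrobenius_autD_comm.
  by rewrite pFrobenius_aut1.
exact/commr_sym/commr1.
Qed.

Lemma expr_gcdn_eq1 (R : pzSemiRingType) (x : R) m k :
  x ^+ m = 1 -> x ^+ k = 1 -> x ^+ gcdn m k = 1.
Proof.
move=> xm xk; have [-> | m_gt0] := posnP m; first by rewrite gcd0n.
have [a _ /dvdnP[c eq_c]] := Bezoutl k m_gt0.
have : x ^+ (gcdn m k + a * k) = 1 by rewrite eq_c mulnC exprM xm expr1n.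
by rewrite exprD mulnC exprM xk expr1n mulr1.
Qed.

Section ZpArithmetic.
Variable q : nat.
Hypothesis q_gt1 : (1 < q)%N.

Lemma ltn_Zp (x : 'Z_q) : (x < q)%N.
Proof. by rewrite -[X in (_ < X)%N]Zp_cast. Qed.

Lemma val_Zp1 : (1%R : 'Z_q) = 1%N :> nat.
Proof. by rewrite /= [X in (_ %% X)%N]Zp_cast // modn_small. Qed.

Lemma val_ZpX (x : 'Z_q) k : (x ^+ k : 'Z_q) = (x ^ k %% q)%N :> nat.
Proof. by rewrite -[in LHS](natr_Zp x) -natrX val_Zp_nat. Qed.

Variables (R : pzSemiRingType) (A : R).
Hypothesis Aq : A ^+ q = 1.

Lemma exprZpD (x y : 'Z_q) : A ^+ (x + y)%R = A ^+ x * A ^+ y.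
Proof. by rewrite /= [X in (_ %% X)%N]Zp_cast // expr_mod // exprD. Qed.

Lemma exprZpM (x y : 'Z_q) : A ^+ (x * y)%R = (A ^+ x) ^+ y.
Proof. by rewrite /= [X in (_ %% X)%N]Zp_cast // expr_mod // exprM. Qed.

End ZpArithmetic.

Lemma prime_expnS_gt1 p s : prime p -> (1 < p ^ s.+1)%N.
Proof. by move=> p_pr; rewrite -(expn0 p) ltn_exp2l ?prime_gt1. Qed.

Section JordanBlockOrder.
Variables (p s : nat).
Hypothesis p_pr : prime p.
Local Notation J := (jordan_mx 'F_p (p ^ s)).

Lemma jordan_mxXp_eq1 v : (J ^+ (p ^ v) == 1) = (s < v)%N.
Proof.
have pcharJ : p \in [pchar 'M['F_p]_((p ^ s).+1)] by rewrite pchar_lalg pchar_Fp.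
rewrite /jordan_mx expr1Dp_pchar // -subr_eq0 addrAC subrr add0r shift_mxX_eq0E.
by rewrite ltn_exp2l ?prime_gt1.
Qed.

Lemma jordan_mxX_eq1 m : (J ^+ m == 1) = (p ^ s.+1 %| m)%N.
Proof.
have Jq : J ^+ (p ^ s.+1) = 1 by apply/eqP; rewrite jordan_mxXp_eq1.
apply/eqP/idP => [Jm | /dvdnP[c ->]]; last by rewrite mulnC exprM Jq expr1n.
have /(dvdn_pfactor _ _ p_pr)[t le_ts eq_g] := dvdn_gcdr m (p ^ s.+1).
rewrite leq_eqVlt ltnS in le_ts; case/orP: le_ts => [/eqP eq_ts | le_ts].
  by rewrite -eq_ts -eq_g dvdn_gcdl.
have : J ^+ (p ^ t * p ^ (s - t)) = 1 by rewrite exprM -eq_g (expr_gcdn_eq1 Jm Jq) expr1n.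
by rewrite -expnD subnKC // => /eqP; rewrite jordan_mxXp_eq1 ltnn.
Qed.

Lemma jordan_mxZp_eq1 (t : 'Z_(p ^ s.+1)) : (J ^+ t == 1) = (t == 0).
Proof.
by rewrite jordan_mxX_eq1 /dvdn modn_small // ltn_Zp ?prime_expnS_gt1.
Qed.

End JordanBlockOrder.

Lemma expr1D_sqr_rem (R : comNzRingType) (y : R) c :
  exists S, (1 + y) ^+ c = 1 + y *+ c + S * (y * y).
Proof.
elim: c => [|c [S IHc]]; first by exists 0; rewrite expr0 mulr0n addr0 mul0r addr0.
exists (S + c%:R + y * S).
rewrite exprS IHc mulrDl mul1r !mulrDr mulrnAr mulrS mulr1 !mulrDl mulr_natl mulrA.
rewrite -!addrA; congr (_ + _); rewrite !mulrA [RHS]addrCA; congr (_ + _).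
by rewrite addrCA.
Qed.

Section OneModP.
Variables (R : comNzRingType) (p : nat).

Lemma expr1Dp (w : R) k : exists w', (1 + p%:R * w) ^+ k = 1 + p%:R * w'.
Proof.
elim: k => [|k [w' IHk]]; first by exists 0; rewrite expr0 mulr0 addr0.
exists (w + w' + p%:R * w * w'); rewrite exprS IHk.
by move: (p%:R : R) => P; ring.
Qed.

Lemma expr1Dp_expn (w : R) j :
  exists w', (1 + p%:R * w) ^+ (p ^ j) = 1 + p%:R ^+ j.+1 * w'.
Proof.
elim: j => [|j [w' IHj]]; first by exists w; rewrite expn0 !expr1.
have [S eqS] := expr1D_sqr_rem (p%:R ^+ j.+1 * w') p.
exists (w' + S * p%:R ^+ j * w' * w').
rewrite expnSr exprM IHj eqS !exprS -[_ *+ p]mulr_natr.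
by move: (p%:R ^+ j : R) (p%:R : R) => Q P; ring.
Qed.

End OneModP.

Section CongruentOneModP.
Variables (p s : nat).
Hypothesis p_pr : prime p.
Local Notation q := (p ^ s.+1)%N.
Local Notation J := (jordan_mx 'F_p (p ^ s)).
Let q_gt1 : (1 < q)%N := prime_expnS_gt1 s p_pr.

Lemma expr1Dp_Zp_order (w : 'Z_q) : (1 + p%:R * w) ^+ q = 1.
Proof.
have [w' ->] := expr1Dp_expn p w s.+1.
by rewrite exprSr -natrX pchar_Zp ?q_gt1 // mul0r mul0r addr0.
Qed.

Lemma Fp_val_1Dp (w : 'Z_q) : (nat_of_ord (1 + p%:R * w)%R)%:R = 1 :> 'F_p.
Proof.
have -> : nat_of_ord (1 + p%:R * w)%R = ((p * w).+1 %% q)%N.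
  by rewrite -[w in LHS]natr_Zp -natrM addrC natr1 (val_Zp_nat q_gt1).
rewrite -(Fp_nat_mod p_pr) modn_dvdm ?dvdn_exp // Fp_nat_mod //.
by rewrite -natr1 natrM pchar_Fp_0 // mul0r add0r.
Qed.

Lemma exists_jordan_conj (w : 'Z_q) :
  exists S : 'M['F_p]_((p ^ s).+1),
    [/\ S ^+ q = 1, S * J = J ^+ (1 + p%:R * w)%R * S & upper_trig_diag 1 S].
Proof.
have Jq : J ^+ q = 1 by apply/eqP; rewrite jordan_mxX_eq1.
set E := (1 + p%:R * w)%R; set D := E ^+ q.-1. (* E^-1 in 'Z_q *)
have DE : D * E = 1 by rewrite -exprSr prednK ?expr1Dp_Zp_order // ltnW.
have Dq : D ^+ q = 1 by rewrite -exprM mulnC exprM expr1Dp_Zp_order // expr1n.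
have [w' Dw'] := expr1Dp p w q.-1.
exists (jordan_subst_mx 'F_p (p ^ s) D); split.
- rewrite jordan_subst_mxX -(jordan_subst_mx_mod _ Jq) -val_ZpX // Dq.
  by rewrite val_Zp1 // jordan_subst_mx1.
- have := intertwineX E (jordan_subst_mx_conj 'F_p (p ^ s) D).
  by rewrite -exprZpM // DE val_Zp1 // expr1.
- by apply: upper_trig_diag_jordan_subst; rewrite /D Dw' Fp_val_1Dp.
Qed.

End CongruentOneModP.

Lemma exponent_cases_1modp (p k s : nat) (e : int) : (1 <= k)%N ->
    e = (p ^ k + 1)%N%:Z
    \/ (p = 2%N /\ e = - ((2 ^ k + 1)%N%:Z))
    \/ (p = 2%N /\ e = -1) ->
  exists w : 'Z_(p ^ s.+1), (e%:~R : 'Z_(p ^ s.+1)) = 1 + p%:R * w.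
Proof.
case: k => // k _; case=> [->|[[-> ->]|[-> ->]]].
- exists (p%:R ^+ k); rewrite -pmulrn natrD natrX exprS.
  by move: (p%:R : 'Z_(p ^ s.+1)) => P; ring.
- exists (-1 - 2%:R ^+ k); rewrite mulrNz -pmulrn natrD natrX exprS.
  by move: (2%:R ^+ k : 'Z_(2 ^ s.+1)) => Q; ring.
- by exists (-1); rewrite mulrN1 -[2%:R]/(1 + 1 : 'Z_(2 ^ s.+1)) opprD addrA subrr add0r.
Qed.

Section SemidirectRepresentation.
Variables (R : pzSemiRingType) (I : Type) (q : nat) (e : int) (J S : R).
Hypotheses (q_gt1 : (1 < q)%N) (Jq : J ^+ q = 1) (Sq : S ^+ q = 1).
Hypothesis SJ : S * J = J ^+ (e%:~R : 'Z_q) * S.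

Lemma semidir_conj a (t : 'Z_q) :
  S ^+ a * J ^+ t = J ^+ ((e%:~R : 'Z_q) ^+ a * t)%R * S ^+ a.
Proof.
elim: a t => [|a IHa] t; first by rewrite !expr0 mul1r mulr1 mul1r.
rewrite exprSr -mulrA (intertwineX t SJ) -exprZpM // mulrA IHa -mulrA -exprSr.
by rewrite mulrA -exprSr.
Qed.

Definition semidir_rep (i0 : I) (x : (I -> 'Z_q) * 'Z_q) : R := J ^+ x.1 i0 * S ^+ x.2.

Lemma semidir_repM i0 x y :
  semidir_rep i0 (semidir_mul e x y) = semidir_rep i0 x * semidir_rep i0 y.
Proof.
change (J ^+ (x.1 i0 + (e%:~R : 'Z_q) ^+ x.2 * y.1 i0)%R * S ^+ (x.2 + y.2)%R =
  J ^+ x.1 i0 * S ^+ x.2 * (J ^+ y.1 i0 * S ^+ y.2)).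
by rewrite !exprZpD // -!mulrA; congr (_ * _); rewrite !mulrA semidir_conj.
Qed.

End SemidirectRepresentation.

Lemma exists_nonzero_coord (I : Type) (V : zmodType) (u : I -> V) :
  u <> (fun _ => 0) -> exists i, u i != 0.
Proof.
move=> u_neq0; apply: NNPP => all0; apply: u_neq0; apply: functional_extensionality => i.
by case: (eqVneq (u i) 0) => // ui; case: all0; exists i.
Qed.

Theorem proposition5p1 (p k s : nat) (I : Type)
  (hp : prime p) (hk : (1 <= k)%N) (hs : (1 <= s)%N) :
  (forall u : I -> 'Z_(p ^ s.+1), u <> (fun _ => 0) ->
    exists rho : (I -> 'Z_(p ^ s.+1)) -> 'M['F_p]_(p ^ s + 1),
      (forall x, upper_unitriangular (rho x)) /\
      (forall x y, rho (fun i => x i + y i) = rho x *m rho y) /\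
      fun_locally_constant rho /\
      rho u <> 1%:M) /\
  (forall e : int,
    e = (p ^ k + 1)%N%:Z
    \/ (p = 2%N /\ e = - ((2 ^ k + 1)%N%:Z))
    \/ (p = 2%N /\ e = -1) ->
    forall u : (I -> 'Z_(p ^ s.+1)) * 'Z_(p ^ s.+1),
    u <> semidir_one I (p ^ s.+1) ->
    exists rho : (I -> 'Z_(p ^ s.+1)) * 'Z_(p ^ s.+1) -> 'M['F_p]_(p ^ s + 1),
      (forall x, upper_unitriangular (rho x)) /\
      (forall x y, rho (semidir_mul e x y) = rho x *m rho y) /\
      prod_locally_constant rho /\
      rho u <> 1%:M).
Proof.
rewrite addn1; have q_gt1 := prime_expnS_gt1 s hp.
set J := jordan_mx 'F_p (p ^ s).
have Jq : J ^+ (p ^ s.+1) = 1 by apply/eqP; rewrite /J jordan_mxX_eq1.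
have tJ t : upper_trig_diag 1 (J ^+ t) by apply/upper_trig_diag1X/upper_trig_diag_jordan.
have J_neq1 (t : 'Z_(p ^ s.+1)) : t != 0 -> J ^+ t <> 1%:M.
  by rewrite -(jordan_mxZp_eq1 hp t) => /eqP.
split=> [u /exists_nonzero_coord[i0 ui0] | e he u u_neq1].
  exists (fun x => J ^+ x i0); split; [|split; [|split]].
  - by move=> x; apply: tJ.
  - by move=> x y; rewrite mulmxE exprZpD.
  - by move=> x; exists [:: i0] => y y_i0; rewrite y_i0 //=; left.
  - exact: J_neq1.
have [w ew] := exponent_cases_1modp s hk he.
have [S [Sq SJ tS]] := exists_jordan_conj hp w; rewrite -ew in SJ.
have [u2_eq0 | u2_neq0] := eqVneq u.2 0; last first.
  exists (fun x : (I -> 'Z_(p ^ s.+1)) * 'Z_(p ^ s.+1) => J ^+ x.2); split; [|split; [|split]].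
  - by move=> x; apply: tJ.
  - by move=> x y; rewrite mulmxE [_.2]/= exprZpD.
  - by move=> x; exists [::] => y _ ->.
  - exact: J_neq1.
have /exists_nonzero_coord[i0 ui0] : u.1 <> (fun _ => 0).
  by move=> u1_eq0; apply: u_neq1; case: u u1_eq0 u2_eq0 => /= ? ? -> ->.
exists (semidir_rep J S i0); split; [|split; [|split]].
- by move=> x; apply: upper_trig_diag1M; [apply: tJ | apply: upper_trig_diag1X].
- by move=> x y; rewrite mulmxE semidir_repM.
- by move=> x; exists [:: i0] => y y_i0 y2; rewrite /semidir_rep y2 y_i0 //=; left.
- by rewrite /semidir_rep u2_eq0 expr0 mulr1; apply: J_neq1.
Qed.
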